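(* Let $i\ge 3$ and $k\ge 3$ be integers. Then: (a) $g_2(F_i,F_{i+2},F_{i+k})=(3F_i-1)F_{i+2}-F_i$ whenever $k\ge i+3$; (b) $g_2(F_i,F_{i+2},F_{2i+2})=(F_{i-2}-1)F_{i+2}+F_{2i+2}-F_i$ if $i$ is odd, and $g_2(F_i,F_{i+2},F_{2i+2})=(F_{i+2}-1)F_{i+2}-F_i$ if $i$ is even; (c) $g_2(F_i,F_{i+2},F_{2i+1})=(F_i-1)F_{i+2}+F_{2i+1}-F_i$; (d) $g_2(F_i,F_{i+2},F_{2i})=(2F_i-1)F_{i+2}-F_i$; (e) $g_2(F_i,F_{i+2},F_{2i-1})=(F_{i-4}-1)F_{i+2}+3F_{2i-1}-F_i$ for $i\ge 5$, and $g_2(F_4,F_6,F_7)=F_6+2F_7-F_4=31$; (f) if $r=\lfloor (F_i-1)/F_k\rfloor\ge 2$ (equivalently $k\le i-2$), then $$g_2(F_i,F_{i+2},F_{i+k})=\begin{cases}(F_i-rF_k-1)F_{i+2}+(r+2)F_{i+k}-F_i & \text{if } (F_i-rF_k)F_{i+2}\ge F_{k-2}F_i,\\ (F_k-1)F_{i+2}+(r+1)F_{i+k}-F_i & \text{if } (F_i-rF_k)F_{i+2}< F_{k-2}F_i.\end{cases}$$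
   Context: Fibonacci numbers: $F_0=0$, $F_1=1$, $F_n=F_{n-1}+F_{n-2}$. For positive integers $a_1,\dots,a_l$ with $\gcd(a_1,\dots,a_l)=1$ and an integer $n$, let $d(n;a_1,\dots,a_l)$ be the number of tuples $(x_1,\dots,x_l)$ of nonnegative integers with $a_1x_1+\dots+a_lx_l=n$. For a nonnegative integer $p$, the $p$-Frobenius number $g_p(a_1,\dots,a_l)$ is the largest integer $n$ with $d(n;a_1,\dots,a_l)\le p$. *)

From mathcomp Require Import all_boot all_order all_algebra.
Set Implicit Arguments. Unset Strict Implicit. Unset Printing Implicit Defensive.
Import Order.TTheory GRing.Theory Num.Theory.

Fixpoint fib (n : nat) : nat :=
  match n with
  | 0 => 0
  | 1 => 1
  | (m.+1 as p).+1 => fib p + fib m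
  end.

(* For positive a, b, c every solution has x, y, z <= n,
   so the triples can be enumerated in 'I_n.+1 ^3. *)
Definition dnat (a b c n : nat) : nat :=
  #|[set t : 'I_n.+1 * 'I_n.+1 * 'I_n.+1 |
       a * t.1.1 + b * t.1.2 + c * t.2 == n]|.

Definition d3 (a b c : nat) (n : int) : nat :=
  match n with
  | Posz m => dnat a b c m
  | Negz _ => 0
  end.

Definition is_gp (p a b c : nat) (g : int) : Prop :=
  (d3 a b c g <= p)%N /\ forall n : int, (g < n)%R -> (p < d3 a b c n)%N.

From mathcomp Require Import all_boot all_order all_algebra.
From mathcomp Require Import zify ring.
Import Order.TTheory GRing.Theory Num.Theory.
Set Implicit Arguments. Unset Strict Implicit. Unset Printing Implicit Defensive.

(* Write a = F_i, b = F_{i+2}, c = F_{i+k} and p = F_k. The identity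
   F_{i+k} + F_{k-2} F_i = F_k F_{i+2} gives c = p b (mod a), and b is invertible
   mod a, so the class of b y + c z mod a is read off y + p z. If every class mod a
   contains three pairs (y, z) with b y + c z <= T, then every n > T - a has at
   least three representations; if moreover T - a has only two, it is g_2. In each
   case the cheap pairs are listed explicitly, and the two representations of
   T - a = b B - a A are found by parametrizing all solutions of
   a x + b y + c z = b B - a A. *)

Section Representations.

Variables (a b c : nat).
Hypotheses (a_gt0 : 0 < a) (b_gt0 : 0 < b) (c_gt0 : 0 < c).

Lemma dnat_le2 (n : nat) (yz1 yz2 : nat * nat) :
  (forall x y z, a * x + b * y + c * z = n -> (y, z) = yz1 \/ (y, z) = yz2) ->
  dnat a b c n <= 2.
Proof.
move=> sols; rewrite /dnat cardE.
pose yz (t : 'I_n.+1 * 'I_n.+1 * 'I_n.+1) := ((t.1.2 : nat), (t.2 : nat)).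
rewrite -(size_map yz) (_ : 2 = size [:: yz1; yz2]) //.
apply: uniq_leq_size.
  rewrite map_inj_in_uniq ?enum_uniq //.
  move=> [[x y] z] [[x' y'] z']; rewrite !mem_enum !inE /= /yz.
  move=> /eqP E /eqP E' [Ey Ez].
  have Ex : a * x = a * x' by lia.
  move/eqP: Ex; rewrite eqn_mul2l gtn_eqF //= => /eqP/val_inj Ex.
  by rewrite Ex (val_inj Ey) (val_inj Ez).
move=> w /mapP [[[x y] z] + ->]; rewrite mem_enum inE /= => /eqP/sols.
by rewrite !inE /yz => -[] ->; rewrite eqxx ?orbT.
Qed.

Lemma dnat_gt2 (n : nat) (x1 y1 z1 x2 y2 z2 x3 y3 z3 : nat) :
  a * x1 + b * y1 + c * z1 = n -> a * x2 + b * y2 + c * z2 = n ->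
  a * x3 + b * y3 + c * z3 = n ->
  [/\ (y1, z1) <> (y2, z2), (y2, z2) <> (y3, z3) & (y3, z3) <> (y1, z1)] ->
  2 < dnat a b c n.
Proof.
have solution_mem x y z : a * x + b * y + c * z = n ->
    exists2 t : 'I_n.+1 * 'I_n.+1 * 'I_n.+1,
      t \in [set t : 'I_n.+1 * 'I_n.+1 * 'I_n.+1 |
              a * t.1.1 + b * t.1.2 + c * t.2 == n]
      & ((t.1.2 : nat), (t.2 : nat)) = (y, z).
  move=> E.
  have hx : x < n.+1 by rewrite ltnS; nia.
  have hy : y < n.+1 by rewrite ltnS; nia.
  have hz : z < n.+1 by rewrite ltnS; nia.
  by exists (Ordinal hx, Ordinal hy, Ordinal hz); rewrite // inE /= E.
move=> /solution_mem[t1 T1 <-] /solution_mem[t2 T2 <-] /solution_mem[t3 T3 <-].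
move=> [D12 D23 D31]; apply/card_gt2P; exists t1, t2, t3; split => //.
by split; apply/eqP => E; [apply: D12 | apply: D23 | apply: D31]; rewrite E.
Qed.

(* Residue classes are labelled through y + p z rather than b y + c z: when
   c = p b (mod a) and b is invertible mod a, the two determine each other. *)
Definition cheap_rep (p T s y z : nat) :=
  exists k, y + p * z = k * a + s /\ b * y + c * z <= T.

Definition three_cheap_reps (p T s : nat) :=
  exists y1 z1 y2 z2 y3 z3,
    [/\ cheap_rep p T s y1 z1, cheap_rep p T s y2 z2, cheap_rep p T s y3 z3 &
     [/\ (y1, z1) <> (y2, z2), (y2, z2) <> (y3, z3) & (y3, z3) <> (y1, z1)]].

Lemma cheap_rep_le (p T s y z k Y : nat) :
  y + p * z = k * a + s -> y <= Y -> b * Y + c * z <= T -> cheap_rep p T s y z.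
Proof.
move=> Hs yY HT; exists k; split => //.
by apply: leq_trans HT; rewrite leq_add2r leq_mul2l yY orbT.
Qed.

Variables (p q : nat).
Hypotheses (coprime_ab : coprime a b) (Hc : c + q * a = p * b).

(* With u b = 1 (mod a), a cheap representative (y, z) of the class of n u has
   b y + c z = n (mod a); the bound T < n + a then forces b y + c z <= n. *)
Lemma cheap_rep_solution (u v n T y z k : nat) :
  u * b = v * a + 1 -> y + p * z = k * a + (n * u) %% a ->
  b * y + c * z <= T -> T < n + a ->
  exists x, a * x + b * y + c * z = n.
Proof.
move=> Hu Hy HT Tn.
set s := (n * u) %% a in Hy; set w := (n * u) %/ a.
have Hd : n * u = w * a + s by rewrite /s /w -divn_eq.
have E1 : b * y + b * p * z = b * k * a + b * s.
  by rewrite -mulnA -mulnDr Hy mulnDr mulnA.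
have E2 : c * z + q * a * z = p * b * z by rewrite -mulnDl Hc.
have E3 : b * (n * u) = b * w * a + b * s by rewrite Hd mulnDr mulnA.
have E4 : n * (u * b) = n * v * a + n by rewrite Hu mulnDr mulnA muln1.
have E : b * y + c * z + a * (q * z + b * w) = n + a * (b * k + n * v).
  have : b * (n * u) = n * (u * b) by rewrite mulnC -mulnA.
  lia.
have Hle : b * k + n * v <= q * z + b * w.
  rewrite leqNgt; apply/negP => H.
  have : a * (q * z + b * w) + a <= a * (b * k + n * v).
    by rewrite -mulnSr leq_mul2l H orbT.
  lia.
exists (q * z + b * w - (b * k + n * v)).
have := leq_mul2l a (b * k + n * v) (q * z + b * w); rewrite Hle orbT.
rewrite mulnBr; lia.
Qed.

Lemma dnat_gt2_above (T : nat) : (forall s, s < a -> three_cheap_reps p T s) ->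
  forall n, T < n + a -> 2 < dnat a b c n.
Proof.
move=> reps n Tn.
case: (egcdnP a b_gt0) => u v Hu _.
rewrite gcdnC (eqP coprime_ab) in Hu.
have [y1 [z1 [y2 [z2 [y3 [z3 [[k1 [H1 T1]] [k2 [H2 T2]] [k3 [H3 T3]] D]]]]]]] :=
  reps _ (ltn_pmod (n * u) a_gt0).
have [x1 E1] := cheap_rep_solution Hu H1 T1 Tn.
have [x2 E2] := cheap_rep_solution Hu H2 T2 Tn.
have [x3 E3] := cheap_rep_solution Hu H3 T3 Tn.
exact: dnat_gt2 E1 E2 E3 D.
Qed.

(* If g = b B - a A, the solutions of a x + b y + c z = g are parametrized by
   (z, t) through y = B - p z - a t and x = b t + q z - A; the hypothesis
   q B < p A + c rules out the branch in which t would be negative. *)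
Lemma solution_param (A B x y z : nat) : q * B < p * A + c ->
  a * x + b * y + c * z + a * A = b * B ->
  exists t, y + p * z + a * t = B /\ x + A = b * t + q * z.
Proof.
move=> Hq E.
have Ez : c * z + q * a * z = p * b * z by rewrite -mulnDl Hc.
have [le|lt] := leqP (y + p * z) B.
- have E2 : a * (x + A) = b * (B - (y + p * z)) + a * (q * z).
    have : b * (y + p * z) <= b * B by rewrite leq_mul2l le orbT.
    rewrite mulnBr !mulnDr; nia.
  have : a %| b * (B - (y + p * z)).
    have -> : b * (B - (y + p * z)) = a * (x + A - q * z).
      by rewrite [RHS]mulnBr E2 addnK.
    exact: dvdn_mulr.
  rewrite Gauss_dvdr // => /dvdnP [t Ht].
  exists t; split; first by nia.
  have : a * (x + A) = a * (b * t + q * z) by rewrite E2 Ht; nia.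
  by move/eqP; rewrite eqn_mul2l gtn_eqF //= => /eqP.
- exfalso.
  have E2 : a * x + b * (y + p * z - B) + a * A = a * (q * z).
    rewrite mulnBr !mulnDr; nia.
  have : a %| b * (y + p * z - B).
    have -> : b * (y + p * z - B) = a * (q * z - x - A).
      rewrite [RHS]mulnBr [a * (_ - x)]mulnBr.
      move: E2; set D := (y + p * z - B); lia.
    exact: dvdn_mulr.
  rewrite Gauss_dvdr // => /dvdnP [t Ht].
  have t_gt0 : 0 < t by rewrite lt0n; apply/eqP => t0; rewrite t0 mul0n in Ht; lia.
  have Ha : y + p * z = B + t * a by lia.
  have Hb : x + b * t + A = q * z.
    have : a * (x + b * t + A) = a * (q * z) by rewrite -E2 Ht; nia.
    by move/eqP; rewrite eqn_mul2l gtn_eqF //= => /eqP.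
  have F1 : q * y + q * p * z = q * B + q * t * a.
    by rewrite -mulnA -mulnDr Ha mulnDr mulnA.
  have F2 : p * x + p * b * t + p * A = p * q * z.
    by rewrite -mulnA -!mulnDr Hb mulnA.
  have F3 : c * t + q * a * t = p * b * t by rewrite -mulnDl Hc.
  have F4 : c <= c * t by rewrite leq_pmulr.
  nia.
Qed.

Lemma is_gp2_criterion (G : int) (T A B : nat) (yz1 yz2 : nat * nat) :
  a <= T -> (G + a%:Z = T%:Z)%R -> (forall s, s < a -> three_cheap_reps p T s) ->
  T - a + a * A = b * B -> q * B < p * A + c ->
  (forall x y z t, y + p * z + a * t = B -> x + A = b * t + q * z ->
     (y, z) = yz1 \/ (y, z) = yz2) ->
  is_gp 2 a b c G.
Proof.
move=> aT HG reps HB Hq two_sols.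
have -> : G = (T - a)%N by lia.
split.
  apply: (@dnat_le2 _ yz1 yz2) => x y z E.
  have [|t [Hy Hx]] := @solution_param A B x y z Hq; first by rewrite E.
  exact: two_sols Hy Hx.
case=> [n|n] //= Hn; apply: (dnat_gt2_above reps).
by move: Hn; rewrite ltz_nat; lia.
Qed.

End Representations.

Lemma fibSS n : fib n.+2 = fib n.+1 + fib n.
Proof. by []. Qed.

Lemma fib_gt0 n : 0 < n -> 0 < fib n.
Proof. by case: n => // n _; elim: n => // n IH; rewrite fibSS addn_gt0 IH. Qed.

Lemma leq_fib : {homo fib : m n / m <= n}.
Proof.
move=> m n /subnKC <-; elim: (n - m) => [|d IH]; first by rewrite addn0.
apply: leq_trans IH _; rewrite addnS.
by case: (m + d) => // j; rewrite fibSS leq_addr.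
Qed.

Lemma fib_addn2_ge n : 2 * fib n <= fib (n + 2).
Proof. by rewrite addn2 fibSS mul2n -addnn leq_add2r leq_fib. Qed.

Lemma fib_addn3_ge n : 3 * fib n <= fib (n + 3).
Proof.
rewrite (_ : n + 3 = (n + 1).+2) ?fibSS; last by rewrite addn3 addn1.
by have := fib_addn2_ge n; have := leq_fib (leq_addr 1 n); rewrite addn1 addn2; lia.
Qed.

Lemma fib_add m n : fib (m + n.+1) = fib m.+1 * fib n.+1 + fib m * fib n.
Proof.
suff [] : fib (m + n.+1) = fib m.+1 * fib n.+1 + fib m * fib n /\
          fib (m.+1 + n.+1) = fib m.+2 * fib n.+1 + fib m.+1 * fib n by [].
elim: m => [|m [IH1 IH2]]; first by rewrite add0n add1n /= !mul1n mul0n addn0.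
split => //; rewrite (_ : m.+2 + n.+1 = (m + n.+1).+2) ?fibSS; last by [].
by rewrite -addSn IH2 IH1 !fibSS; ring.
Qed.

(* Reduced mod F_i, this identity says F_{i+k} = F_k F_{i+2}. *)
Lemma fib_cross i k : 2 <= k -> fib (i + k) + fib (k - 2) * fib i = fib k * fib (i + 2).
Proof.
case: k => [|[|k]] // _; rewrite subn2 /=.
have -> : i + k.+2 = k.+1 + i.+1 by lia.
by rewrite addn2 fib_add !fibSS; ring.
Qed.

Lemma coprime_fib_addn2 n : coprime (fib n) (fib (n + 2)).
Proof.
rewrite addn2 /coprime fibSS gcdnDr.
by elim: n => // n IH; rewrite fibSS gcdnDl gcdnC.
Qed.

Lemma fib_cassini n : fib n * fib n.+2 + ~~ odd n = fib n.+1 * fib n.+1 + odd n.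
Proof.
elim: n => // n IH; rewrite /= negbK.
rewrite !fibSS in IH *.
by case: (odd n) IH => /=; nia.
Qed.

Lemma fib_subn2 n : 2 <= n -> fib n = fib (n - 1) + fib (n - 2).
Proof. by case: n => [|[|n]] // _; rewrite fibSS subn1 subn2. Qed.

Lemma fib_addn2 n : 0 < n -> fib (n + 2) = 2 * fib n + fib (n - 1).
Proof. by case: n => // n _; rewrite addn2 !fibSS subn1 /=; lia. Qed.

Lemma fib_cassini_subn2 n : 2 <= n ->
  fib (n - 2) * fib n + ~~ odd n = fib (n - 1) * fib (n - 1) + odd n.
Proof.
case: n => [|[|n]] // _; rewrite subn1 subn2 /=.
by have := fib_cassini n; rewrite /= negbK; case: (odd n).
Qed.

Section LargeP.

Variables (a b c p q : nat).
Hypotheses (a_gt0 : 0 < a) (q_gt0 : 0 < q) (q2p : 2 * q <= p) (a2b : 2 * a <= b)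
  (a3p : 3 * a <= p) (coprime_ab : coprime a b) (Hc : c + q * a = p * b).

Lemma large_p_reps s : s < a -> three_cheap_reps a b c p ((3 * a - 1) * b) s.
Proof.
move=> sa; exists s, 0, (s + a), 0, (s + 2 * a), 0; split.
- by exists 0; split; nia.
- by exists 1; split; nia.
- by exists 2; split; nia.
- by split; case; lia.
Qed.

Lemma large_p_two_sols x y z t : y + p * z + a * t = 3 * a - 1 ->
  x + 1 = b * t + q * z -> (y, z) = (2 * a - 1, 0) \/ (y, z) = (a - 1, 0).
Proof.
case: z => [|z]; last by nia.
by case: t => [|[|[|t]]] Hy Hx; [nia | left | right | nia]; congr (_, _); lia.
Qed.

Lemma gp2_large_p : is_gp 2 a b c ((3 * a%:Z - 1) * b%:Z - a%:Z).
Proof.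
have qa_pb : 4 * (q * a) <= p * b by nia.
apply: (is_gp2_criterion _ _ _ coprime_ab Hc (T := (3 * a - 1) * b) (A := 1)
  (B := 3 * a - 1) _ _ large_p_reps _ _ large_p_two_sols); nia.
Qed.

End LargeP.

Lemma gp2_fib_large_k i k : 3 <= i -> i + 3 <= k ->
  is_gp 2 (fib i) (fib (i + 2)) (fib (i + k))
    ((3 * (fib i)%:Z - 1) * (fib (i + 2))%:Z - (fib i)%:Z).
Proof.
move=> hi hk; apply: (gp2_large_p (p := fib k) (q := fib (k - 2))).
- by apply: fib_gt0; lia.
- by apply: fib_gt0; lia.
- by have := fib_addn2_ge (k - 2); rewrite subnK //; lia.
- exact: fib_addn2_ge.
- by apply: leq_trans (fib_addn3_ge i) (leq_fib hk).
- exact: coprime_fib_addn2.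
- by apply: fib_cross; lia.
Qed.

Section PEqB.

Variables (a b c e r : nat).
Hypotheses (r_gt0 : 0 < r) (e_gt0 : 0 < e) (Ha : a = e + r) (Hb : b = 2 * a + e)
  (coprime_ab : coprime a b) (Hc : c + a * a = b * b).

Lemma p_eq_b_reps T s :
  b * (2 * a - 1) <= T -> b * (b - 1) <= T -> b * (r - 1) + c <= T -> s < a ->
  three_cheap_reps a b c b T s.
Proof.
move=> T1 T2 T3 sa; have [es|se] := leqP e s.
- exists s, 0, (s + a), 0, (s - e), 1; split.
  + by apply: (cheap_rep_le (k := 0) (Y := 2 * a - 1)); rewrite ?muln0 ?addn0; lia.
  + by apply: (cheap_rep_le (k := 1) (Y := 2 * a - 1)); rewrite ?muln0 ?addn0; lia.
  + by apply: (cheap_rep_le (k := 2) (Y := r - 1)); rewrite ?muln1; lia.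
  + by split; case; lia.
- exists s, 0, (s + a), 0, (s + 2 * a), 0; split.
  + by apply: (cheap_rep_le (k := 0) (Y := 2 * a - 1)); rewrite ?muln0 ?addn0; lia.
  + by apply: (cheap_rep_le (k := 1) (Y := 2 * a - 1)); rewrite ?muln0 ?addn0; lia.
  + by apply: (cheap_rep_le (k := 2) (Y := b - 1)); rewrite ?muln0 ?addn0; lia.
  + by split; case; lia.
Qed.

Lemma p_eq_b_two_sols_odd x y z t :
  y + b * z + a * t = r - 1 + b -> x + (a + 1) = b * t + a * z ->
  (y, z) = (r - 1 + b - a, 0) \/ (y, z) = (r - 1 + b - 2 * a, 0).
Proof.
case: z => [|[|z]] Hy Hx; rewrite ?mulnS ?muln0 in Hy Hx; last by lia.
- case: t Hy Hx => [|[|[|t]]] Hy Hx; rewrite ?mulnS ?muln0 in Hy Hx; try lia.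
  + by left; congr (_, _); lia.
  + by right; congr (_, _); lia.
- by case: t Hy Hx => [|t] Hy Hx; rewrite ?mulnS ?muln0 in Hy Hx; lia.
Qed.

Lemma p_eq_b_two_sols_even x y z t :
  y + b * z + a * t = b - 1 -> x + 1 = b * t + a * z ->
  (y, z) = (b - 1 - a, 0) \/ (y, z) = (b - 1 - 2 * a, 0).
Proof.
case: z => [|z] Hy Hx; last by rewrite mulnS in Hy; lia.
case: t Hy Hx => [|[|[|t]]] Hy Hx; rewrite ?mulnS ?muln0 in Hy Hx; try lia.
- by left; congr (_, _); lia.
- by right; congr (_, _); lia.
Qed.

Let a_gt0 : 0 < a. Proof. lia. Qed.
Let b_gt0 : 0 < b. Proof. lia. Qed.
Let a2b : 2 * a <= b. Proof. lia. Qed.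
Let aa_bb : 4 * (a * a) <= b * b. Proof. by have := leq_mul a2b a2b; lia. Qed.
Let c_gt0 : 0 < c. Proof. lia. Qed.

(* With a = e + r and b = 2a + e, Cassini's identity r a - e^2 = +-1 reads
   b r - a^2 = +-1. *)
Lemma gp2_p_eq_b_odd : r * a = e * e + 1 ->
  is_gp 2 a b c ((r%:Z - 1) * b%:Z + c%:Z - a%:Z).
Proof.
move=> cassini.
have br : b * r = a * a + 1 by rewrite Hb Ha; rewrite Ha in cassini; nia.
have ar : a * r <= b * r by rewrite leq_mul2r; lia.
have ab : b * (2 * a) <= b * b by rewrite leq_mul2l; lia.
have bb : b <= b * b by rewrite leq_pmulr.
have rb : b <= r * b by rewrite leq_pmull.
apply: (is_gp2_criterion a_gt0 b_gt0 c_gt0 coprime_ab Hc (T := (r - 1) * b + c)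
  (A := a + 1) (B := r - 1 + b) (yz1 := (r - 1 + b - a, 0))
  (yz2 := (r - 1 + b - 2 * a, 0))); rewrite ?(mulnBl, mulnBr, mulnDl, mulnDr).
- lia.
- lia.
- move=> s; apply: p_eq_b_reps; rewrite ?(mulnBl, mulnBr); lia.
- lia.
- lia.
- exact: p_eq_b_two_sols_odd.
Qed.

Lemma gp2_p_eq_b_even : r * a + 1 = e * e ->
  is_gp 2 a b c ((b%:Z - 1) * b%:Z - a%:Z).
Proof.
move=> cassini.
have br : b * r + 1 = a * a by rewrite Hb Ha; rewrite Ha in cassini; nia.
have ab : b * (2 * a) <= b * b by rewrite leq_mul2l; lia.
have bb : 2 * b <= b * b by rewrite mulnC leq_mul2l; lia.
have rb : b <= b * r by rewrite leq_pmulr.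
apply: (is_gp2_criterion a_gt0 b_gt0 c_gt0 coprime_ab Hc (T := (b - 1) * b)
  (A := 1) (B := b - 1) (yz1 := (b - 1 - a, 0)) (yz2 := (b - 1 - 2 * a, 0)));
  rewrite ?(mulnBl, mulnBr, mulnDl, mulnDr).
- lia.
- lia.
- move=> s; apply: p_eq_b_reps; rewrite ?(mulnBl, mulnBr); lia.
- lia.
- lia.
- exact: p_eq_b_two_sols_even.
Qed.

End PEqB.

Lemma gp2_fib_2i2_odd i : 3 <= i -> odd i ->
  is_gp 2 (fib i) (fib (i + 2)) (fib (2 * i + 2))
    (((fib (i - 2))%:Z - 1) * (fib (i + 2))%:Z + (fib (2 * i + 2))%:Z - (fib i)%:Z).
Proof.
move=> hi odd_i; apply: (gp2_p_eq_b_odd (e := fib (i - 1))).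
- by apply: fib_gt0; lia.
- by apply: fib_gt0; lia.
- by apply: fib_subn2; lia.
- by apply: fib_addn2; lia.
- exact: coprime_fib_addn2.
- have -> : 2 * i + 2 = i + (i + 2) by lia.
  by have := fib_cross i (leq_addl i 2); rewrite addnK.
- by have := fib_cassini_subn2 (ltnW hi); rewrite odd_i; lia.
Qed.

Lemma gp2_fib_2i2_even i : 3 <= i -> ~~ odd i ->
  is_gp 2 (fib i) (fib (i + 2)) (fib (2 * i + 2))
    (((fib (i + 2))%:Z - 1) * (fib (i + 2))%:Z - (fib i)%:Z).
Proof.
move=> hi /negbTE even_i.
apply: (gp2_p_eq_b_even (e := fib (i - 1)) (r := fib (i - 2))).
- by apply: fib_gt0; lia.
- by apply: fib_gt0; lia.
- by apply: fib_subn2; lia.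
- by apply: fib_addn2; lia.
- exact: coprime_fib_addn2.
- have -> : 2 * i + 2 = i + (i + 2) by lia.
  by have := fib_cross i (leq_addl i 2); rewrite addnK.
- by have := fib_cassini_subn2 (ltnW hi); rewrite even_i; lia.
Qed.

Section PEqAAddQ.

Variables (a b c p q : nat).
Hypotheses (q_gt0 : 0 < q) (qa : q <= a) (Hp : p = a + q) (Hb : b = 2 * a + q)
  (coprime_ab : coprime a b) (Hc : c + q * a = p * b).

Let ab_c : a * b <= c. Proof. by have := Hc; rewrite Hp Hb; nia. Qed.

Lemma p_eq_a_add_q_reps s : s < a -> three_cheap_reps a b c p ((a - 1) * b + c) s.
Proof.
move=> sa; have [qs|sq] := leqP q s.
- exists s, 0, (s + a), 0, (s - q), 1; split.
  + by exists 0; split; nia.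
  + by exists 1; split; nia.
  + by exists 1; split; nia.
  + by split; case; lia.
- exists s, 0, (s + a), 0, (s + a - q), 1; split.
  + by exists 0; split; nia.
  + by exists 1; split; nia.
  + by exists 2; split; nia.
  + by split; case; lia.
Qed.

Lemma p_eq_a_add_q_two_sols x y z t :
  y + p * z + a * t = a - 1 + p -> x + (q + 1) = b * t + q * z ->
  (y, z) = (p - 1, 0) \/ (y, z) = (q - 1, 0).
Proof.
rewrite Hp => Hy Hx.
case: z t Hy Hx => [|[|z]] [|[|[|t]]] Hy Hx; try nia.
- by left; congr (_, _); lia.
- by right; congr (_, _); lia.
Qed.

Lemma gp2_p_eq_a_add_q : is_gp 2 a b c ((a%:Z - 1) * b%:Z + c%:Z - a%:Z).
Proof.
have a_gt0 : 0 < a by lia.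
have b_gt0 : 0 < b by lia.
have c_gt0 : 0 < c by nia.
apply: (is_gp2_criterion a_gt0 b_gt0 c_gt0 coprime_ab Hc (T := (a - 1) * b + c)
  (A := q + 1) (B := a - 1 + p) (yz1 := (p - 1, 0)) (yz2 := (q - 1, 0))).
- have : a <= a * b by rewrite leq_pmulr.
  by rewrite mulnBl mul1n; lia.
- have : b <= a * b by rewrite leq_pmull.
  by rewrite mulnBl mul1n; lia.
- exact: p_eq_a_add_q_reps.
- by case: a qa Hp Hb Hc ab_c => // a' *; subst; rewrite subn1 /=; nia.
- by case: a qa Hp Hb Hc ab_c => // a' *; subst; rewrite subn1 /=; nia.
- exact: p_eq_a_add_q_two_sols.
Qed.

End PEqAAddQ.

Lemma gp2_fib_2i1 i : 3 <= i ->
  is_gp 2 (fib i) (fib (i + 2)) (fib (2 * i + 1))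
    (((fib i)%:Z - 1) * (fib (i + 2))%:Z + (fib (2 * i + 1))%:Z - (fib i)%:Z).
Proof.
move=> hi; apply: (gp2_p_eq_a_add_q (p := fib (i + 1)) (q := fib (i - 1))).
- by apply: fib_gt0; lia.
- by apply: leq_fib; lia.
- by case: i hi => // j _; rewrite addn1 fibSS subSS subn0.
- by apply: fib_addn2; lia.
- exact: coprime_fib_addn2.
- have -> : 2 * i + 1 = i + (i + 1) by lia.
  have -> : i - 1 = i + 1 - 2 by lia.
  by apply: fib_cross; lia.
Qed.

Section PEqA.

Variables (a b c u v : nat).
Hypotheses (u_gt0 : 0 < u) (uv : u <= v) (Ha : a = v + u) (Hb : b = 2 * a + v)
  (coprime_ab : coprime a b) (Hc : c + u * a = a * b).

Lemma p_eq_a_reps s : s < a -> three_cheap_reps a b c a ((2 * a - 1) * b) s.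
Proof.
move=> sa; exists s, 0, (s + a), 0, s, 1; split.
- by exists 0; split; nia.
- by exists 1; split; nia.
- by exists 1; split; nia.
- by split; case; lia.
Qed.

Lemma p_eq_a_two_sols x y z t :
  y + a * z + a * t = 2 * a - 1 -> x + 1 = b * t + u * z ->
  (y, z) = (a - 1, 1) \/ (y, z) = (a - 1, 0).
Proof.
move=> Hy Hx; have : z + t <= 1 by nia.
case: z t Hy Hx => [|[|z]] [|[|t]] //= Hy Hx; try lia.
- by right; congr (_, _); lia.
- by left; congr (_, _); lia.
Qed.

Lemma gp2_p_eq_a : is_gp 2 a b c ((2 * a%:Z - 1) * b%:Z - a%:Z).
Proof.
have a_gt0 : 0 < a by lia.
have b_gt0 : 0 < b by lia.
have c_gt0 : 0 < c by nia.
have ab : b <= a * b by rewrite leq_pmull.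
apply: (is_gp2_criterion a_gt0 b_gt0 c_gt0 coprime_ab Hc (T := (2 * a - 1) * b)
  (A := 1) (B := 2 * a - 1) (yz1 := (a - 1, 1)) (yz2 := (a - 1, 0))).
- by rewrite ?(mulnBl, mulnBr) ?mul1n ?muln1; nia.
- by rewrite mulnBl mul1n; lia.
- exact: p_eq_a_reps.
- by rewrite ?(mulnBl, mulnBr) ?mul1n ?muln1; nia.
- by rewrite ?(mulnBl, mulnBr) ?mul1n ?muln1; nia.
- exact: p_eq_a_two_sols.
Qed.

End PEqA.

Lemma gp2_fib_2i i : 3 <= i ->
  is_gp 2 (fib i) (fib (i + 2)) (fib (2 * i))
    ((2 * (fib i)%:Z - 1) * (fib (i + 2))%:Z - (fib i)%:Z).
Proof.
move=> hi; apply: (gp2_p_eq_a (u := fib (i - 2)) (v := fib (i - 1))).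
- by apply: fib_gt0; lia.
- by apply: leq_fib; lia.
- by apply: fib_subn2; lia.
- by apply: fib_addn2; lia.
- exact: coprime_fib_addn2.
- have -> : 2 * i = i + i by lia.
  by apply: fib_cross; lia.
Qed.

(* Here e4 = F_{i-4} and e5 = F_{i-5}, so that q = F_{i-3}, p = F_{i-1}, a = F_i
   and b = F_{i+2}. *)
Section PEqFibPred.

Variables (a b c p q e4 e5 : nat).
Hypotheses (e4_gt0 : 0 < e4) (e54 : e5 <= e4) (Hq : q = e4 + e5)
  (Hp : p = 3 * e4 + 2 * e5) (Ha : a = 5 * e4 + 3 * e5) (Hb : b = 13 * e4 + 8 * e5)
  (coprime_ab : coprime a b) (Hc : c + q * a = p * b).

Let T := (e4 - 1) * b + 3 * c.

Let c_val : c = 34 * (e4 * e4) + 42 * (e4 * e5) + 13 * (e5 * e5).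
Proof. by have := Hc; rewrite Hq Hp Ha Hb; nia. Qed.

Lemma fib_pred_costs :
  [/\ b * (a - 1) + c <= T, b * (p - 1) + 2 * c <= T & b * (2 * p - 1) <= T].
Proof.
have h1 : e5 * e5 <= e4 * e5 by rewrite leq_mul2r e54 orbT.
have h2 : e4 * e5 <= e4 * e4 by rewrite leq_mul2l e54 orbT.
rewrite /T c_val Hp Ha Hb.
by case: e4 e4_gt0 e54 h1 h2 => // f _ *; rewrite !subn1 /=; split; lia.
Qed.

Lemma fib_pred_reps s : s < a -> three_cheap_reps a b c p T s.
Proof.
move=> sa; have [U1 U3 U4] := fib_pred_costs.
have U2 : b * (e4 - 1) + c * 3 <= T by rewrite /T mulnC [c * 3]mulnC.
have [ps|sp] := leqP p s; [have [s3|s3] := leqP (3 * p) (s + a) |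
                           have [s2|s2] := leqP (2 * p) (s + a)].
- exists s, 0, (s - p), 1, (s + a - 3 * p), 3; split.
  + by apply: (cheap_rep_le (k := 0) (Y := a - 1)); lia.
  + by apply: (cheap_rep_le (k := 0) (Y := a - 1)); lia.
  + by apply: (cheap_rep_le (k := 1) (Y := e4 - 1)); lia.
  + by split; case; lia.
- exists s, 0, (s - p), 1, (s + a - 2 * p), 2; split.
  + by apply: (cheap_rep_le (k := 0) (Y := a - 1)); lia.
  + by apply: (cheap_rep_le (k := 0) (Y := a - 1)); lia.
  + by apply: (cheap_rep_le (k := 1) (Y := p - 1)); lia.
  + by split; case; lia.
- exists s, 0, (s + a - p), 1, (s + a - 2 * p), 2; split.
  + by apply: (cheap_rep_le (k := 0) (Y := a - 1)); lia.
  + by apply: (cheap_rep_le (k := 1) (Y := a - 1)); lia.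
  + by apply: (cheap_rep_le (k := 1) (Y := p - 1)); lia.
  + by split; case; lia.
- exists s, 0, (s + a - p), 1, (s + a), 0; split.
  + by apply: (cheap_rep_le (k := 0) (Y := a - 1)); lia.
  + by apply: (cheap_rep_le (k := 1) (Y := a - 1)); lia.
  + by apply: (cheap_rep_le (k := 1) (Y := 2 * p - 1)); lia.
  + by split; case; lia.
Qed.

Lemma fib_pred_two_sols x y z t :
  y + p * z + a * t = e4 - 1 + 3 * p -> x + (3 * q + 1) = b * t + q * z ->
  (y, z) = (a - 1, 0) \/ (y, z) = (a - 1 - p, 1).
Proof.
move=> Hy Hx; case: t Hy Hx => [|[|t]] Hy Hx; rewrite ?mulnS ?muln0 in Hy Hx.
- by case: z Hy Hx => [|[|[|[|z]]]] Hy Hx; rewrite ?mulnS ?muln0 in Hy Hx; lia.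
- case: z Hy Hx => [|[|z]] Hy Hx; rewrite ?mulnS ?muln0 in Hy Hx; try lia.
  + by left; congr (_, _); lia.
  + by right; congr (_, _); lia.
- lia.
Qed.

Lemma gp2_fib_pred : is_gp 2 a b c ((e4%:Z - 1) * b%:Z + 3 * c%:Z - a%:Z).
Proof.
have a_gt0 : 0 < a by lia.
have b_gt0 : 0 < b by lia.
have e4e4 : e4 <= e4 * e4 by rewrite leq_pmulr.
have e4e5 : e5 <= e4 * e5 by rewrite leq_pmull.
have c_gt0 : 0 < c by rewrite c_val; lia.
apply: (is_gp2_criterion a_gt0 b_gt0 c_gt0 coprime_ab Hc (T := T)
  (A := 3 * q + 1) (B := e4 - 1 + 3 * p) (yz1 := (a - 1, 0)) (yz2 := (a - 1 - p, 1))).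
- by rewrite /T mulnBl mul1n c_val Ha Hb; lia.
- by rewrite /T mulnBl mul1n c_val Ha Hb; lia.
- exact: fib_pred_reps.
- by rewrite /T !(mulnBl, mulnBr, mulnDl, mulnDr) ?mul1n ?muln1 ?c_val ?Hq ?Hp ?Ha ?Hb; lia.
- by rewrite !(mulnBl, mulnBr, mulnDl, mulnDr) ?mul1n ?muln1 ?c_val ?Hq ?Hp ?Ha; lia.
- exact: fib_pred_two_sols.
Qed.

End PEqFibPred.

Lemma gp2_fib_2i_sub1 i : 5 <= i ->
  is_gp 2 (fib i) (fib (i + 2)) (fib (2 * i - 1))
    (((fib (i - 4))%:Z - 1) * (fib (i + 2))%:Z + 3 * (fib (2 * i - 1))%:Z - (fib i)%:Z).
Proof.
move=> hi; have [j ->] : exists j, i = j.+4.+1 by exists (i - 5); lia.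
have -> : j.+4.+1 - 4 = j.+1 by [].
apply: (gp2_fib_pred (p := fib j.+4) (q := fib j.+2) (e5 := fib j)).
- exact: fib_gt0.
- exact: leq_fib.
- by rewrite !fibSS.
- by rewrite !fibSS; lia.
- by rewrite !fibSS; lia.
- by rewrite addn2 !fibSS; lia.
- exact: coprime_fib_addn2.
- have -> : 2 * j.+4.+1 - 1 = j.+4.+1 + j.+4 by lia.
  by apply: fib_cross.
Qed.

Lemma gp2_fib_4_6_7 :
  is_gp 2 (fib 4) (fib 6) (fib 7) ((fib 6)%:Z + 2 * (fib 7)%:Z - (fib 4)%:Z).
Proof.
apply: (@is_gp2_criterion 3 8 13 _ _ _ 2 1 _ _ _ 34 3 5 (2, 0) (0, 1)) => //.
- by case=> [|[|[|s]]] // _;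
    [exists 0, 0, 3, 0, 1, 1 | exists 1, 0, 0, 2, 2, 1 | exists 2, 0, 0, 1, 1, 2];
    split; try (by exists 0); try (by exists 1); split; case; lia.
- move=> x y z [|[|t]] Hy Hx; try lia.
  by case: z Hy Hx => [|[|z]] Hy Hx; [left | right | lia]; congr (_, _); lia.
Qed.

Section SmallP.

(* p is written p1 + 1 to keep truncated subtraction out of the arithmetic. *)
Variables (a b c p1 q r w : nat).
Let p := p1 + 1.
Hypotheses (q_gt0 : 0 < q) (r_ge2 : 2 <= r) (wp : w <= p1) (Ha : a = r * p + w + 1)
  (Hc : c + q * a = p * b) (qa_pb : 2 * (q * a) <= p * b).

Let T1 := b * w + (r + 2) * c.
Let T2 := b * p1 + (r + 1) * c.
Let T := maxn T1 T2.

Let pb_2c : p * b <= 2 * c. Proof. lia. Qed.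
Let c2_cr : c * 2 <= c * r. Proof. by rewrite leq_mul2l r_ge2 orbT. Qed.
Let le_T1 X : X <= T1 -> X <= T. Proof. by move/leq_trans; apply; rewrite leq_maxl. Qed.
Let le_T2 X : X <= T2 -> X <= T. Proof. by move/leq_trans; apply; rewrite leq_maxr. Qed.

Lemma small_p_reps0 rho : rho < p -> three_cheap_reps a b c p T rho.
Proof.
move=> rhop; have [big|small] := leqP p (rho + w + 1).
- exists rho, 0, (rho + w + 1 - p), (r + 1), (rho + w + 1), r; split.
  + apply: (cheap_rep_le (k := 0) (Y := p1)); [lia | lia | apply: le_T2; lia].
  + apply: (cheap_rep_le (k := 1) (Y := w)); [rewrite Ha /p; lia | rewrite /p in big *; lia |].
    by apply: le_T1; lia.
  + apply: (cheap_rep_le (k := 1) (Y := w + p)); [rewrite Ha /p; lia | rewrite /p in big *; lia |].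
    by apply: le_T1; have := pb_2c; rewrite /p; lia.
  + by split; case; lia.
- exists rho, 0, (rho + w + 1), r, (rho + w + 1 + p), (r - 1); split.
  + apply: (cheap_rep_le (k := 0) (Y := p1)); [lia | lia | apply: le_T2; lia].
  + apply: (cheap_rep_le (k := 1) (Y := p1)); [rewrite Ha /p; lia | rewrite /p in small *; lia |].
    by apply: le_T2; lia.
  + apply: (cheap_rep_le (k := 1) (Y := p1 + p)); last 1 first.
    * by apply: le_T2; have := pb_2c; rewrite /T2 /p; case: r r_ge2 => [|r'] // _; rewrite subn1 /=; lia.
    * by rewrite Ha /p; case: r r_ge2 => [|r'] // _; rewrite subn1 /=; lia.
    * by rewrite /p in small *; lia.
  + by split; case; lia.
Qed.

Lemma small_p_reps1 rho : rho < p -> three_cheap_reps a b c p T (p + rho).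
Proof.
move=> rhop; have [big|small] := leqP p (rho + w + 1).
- exists (p + rho), 0, rho, 1, (rho + w + 1 - p), (r + 2); split.
  + apply: (cheap_rep_le (k := 0) (Y := p + p1)); [lia | rewrite /p in rhop *; lia |].
    by apply: le_T2; have := pb_2c; rewrite /T2 /p; lia.
  + apply: (cheap_rep_le (k := 0) (Y := p1)); [lia | rewrite /p in rhop *; lia |].
    by apply: le_T2; lia.
  + apply: (cheap_rep_le (k := 1) (Y := w)); [rewrite Ha /p; lia | rewrite /p in big rhop *; lia |].
    by apply: le_T1; lia.
  + by split; case; lia.
- exists (p + rho), 0, rho, 1, (rho + w + 1), (r + 1); split.
  + apply: (cheap_rep_le (k := 0) (Y := p + p1)); [lia | rewrite /p in rhop *; lia |].
    by apply: le_T2; have := pb_2c; rewrite /T2 /p; lia.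
  + apply: (cheap_rep_le (k := 0) (Y := p1)); [lia | rewrite /p in rhop *; lia |].
    by apply: le_T2; lia.
  + apply: (cheap_rep_le (k := 1) (Y := p1)); [rewrite Ha /p; lia | rewrite /p in small *; lia |].
    by apply: le_T2; lia.
  + by split; case; lia.
Qed.

Lemma small_p_reps_ge2 m rho : rho < p -> m.+2 * p + rho < a ->
  three_cheap_reps a b c p T (m.+2 * p + rho).
Proof.
move=> rhop sa.
have cost : b * (rho + 2 * p) + c * m <= T.
  have [mr|mr] := eqVneq m.+2 r.
  - have rw : rho <= w by rewrite leqNgt; apply/negP => h; rewrite Ha -mr in sa; lia.
    have := leq_mul (leqnn b) rw => bw.
    by apply: le_T1; rewrite /T1 -mr; lia.
  - have [d Er] : exists d, r = m.+3 + d.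
      exists (r - m.+3); suff : m.+2 < r by lia.
      rewrite ltn_neqAle mr /=; rewrite leqNgt; apply/negP => rm.
      have : p * r.+1 <= p * m.+2 by rewrite leq_mul2l rm orbT.
      by rewrite Ha in sa; lia.
    have bp1 : b * rho <= b * p1 by rewrite leq_mul2l; rewrite /p in rhop; lia.
    by apply: le_T2; have := pb_2c; rewrite /T2 /p Er; lia.
have c_pb : c <= p * b by lia.
exists rho, m.+2, (rho + p), m.+1, (rho + 2 * p), m; split.
- apply: (cheap_rep_le (k := 0) (Y := rho)); [lia | lia |].
  by apply: leq_trans cost; rewrite /p in c_pb *; lia.
- apply: (cheap_rep_le (k := 0) (Y := rho + p)); [lia | lia |].
  by apply: leq_trans cost; rewrite /p in c_pb *; lia.
- by apply: (cheap_rep_le (k := 0) (Y := rho + 2 * p)); [lia | lia | exact: cost].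
- by split; case; lia.
Qed.

Lemma small_p_reps s : s < a -> three_cheap_reps a b c p T s.
Proof.
rewrite (divn_eq s p); have : s %% p < p by rewrite ltn_pmod // /p addn1.
case: (s %/ p) => [|[|m]] rhop sa.
- by rewrite mul0n add0n; apply: small_p_reps0.
- by rewrite mul1n; apply: small_p_reps1.
- exact: small_p_reps_ge2.
Qed.

Let rp : 2 * p <= r * p. Proof. by rewrite leq_mul2r r_ge2 orbT. Qed.

Lemma small_p_two_sols_hi x y z t : y + p * z + a * t = a - 1 + 2 * p ->
  x + ((r + 2) * q + 1) = b * t + q * z ->
  (y, z) = (2 * p - 1, 0) \/ (y, z) = (p - 1, 1).
Proof.
move=> Hy Hx; case: t Hy Hx => [|[|t]] Hy Hx.
- have zr : r + 3 <= z.
    rewrite leqNgt; apply/negP => h.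
    by have := leq_mul (leqnn q) (_ : z <= r + 2); lia.
  by have := leq_mul (leqnn p) zr; rewrite Ha /p in Hy *; lia.
- rewrite muln1 in Hy; case: z Hy Hx => [|[|z]] Hy Hx.
  + by left; congr (_, _); rewrite Ha /p in Hy *; lia.
  + by right; congr (_, _); rewrite Ha /p in Hy *; lia.
  + by rewrite !mulnS in Hy; have := rp; rewrite Ha /p in Hy *; lia.
- by rewrite !mulnS in Hy; have := rp; rewrite Ha /p in Hy *; lia.
Qed.

Lemma small_p_two_sols_lo x y z t : y + p * z + a * t = (r + 2) * p - 1 ->
  x + ((r + 1) * q + 1) = b * t + q * z ->
  (y, z) = (2 * p - 2 - w, 0) \/ (y, z) = (p - 2 - w, 1).
Proof.
move=> Hy Hx; case: t Hy Hx => [|[|t]] Hy Hx.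
- have zr : r + 2 <= z.
    rewrite leqNgt; apply/negP => h.
    by have := leq_mul (leqnn q) (_ : z <= r + 1); lia.
  by have := leq_mul (leqnn p) zr; rewrite /p in Hy *; lia.
- rewrite muln1 in Hy; case: z Hy Hx => [|[|z]] Hy Hx.
  + by left; congr (_, _); rewrite Ha /p in Hy *; lia.
  + by right; congr (_, _); rewrite Ha /p in Hy *; lia.
  + by rewrite !mulnS in Hy; have := rp; rewrite Ha /p in Hy *; lia.
- by rewrite !mulnS in Hy; have := rp; rewrite Ha /p in Hy *; lia.
Qed.

Let small_p_facts :
  [/\ c * r + q * a * r = p * b * r, a <= q * a, q * w <= q * p1 & q * p <= q * a].
Proof.
split; first by rewrite -mulnDl Hc.
- by rewrite leq_pmull.
- by rewrite leq_mul2l wp orbT.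
- by rewrite leq_mul2l Ha; have := rp; lia.
Qed.

Lemma small_p_arith_hi :
  [/\ a <= T1, T1 - a + a * ((r + 2) * q + 1) = b * (a - 1 + 2 * p)
    & q * (a - 1 + 2 * p) < p * ((r + 2) * q + 1) + c].
Proof.
have [Hcr qa qw qpa] := small_p_facts; have Hc' := Hc; have qa_pb' := qa_pb.
move: Hcr qpa; rewrite /T1 Ha /p => Hcr qpa.
by rewrite Ha /p in qa Hc' qa_pb'; split; lia.
Qed.

Lemma small_p_arith_lo :
  [/\ a <= T2, T2 - a + a * ((r + 1) * q + 1) = b * ((r + 2) * p - 1)
    & q * ((r + 2) * p - 1) < p * ((r + 1) * q + 1) + c].
Proof.
have [Hcr qa qw qpa] := small_p_facts; have Hc' := Hc; have qa_pb' := qa_pb.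
move: Hcr qpa; rewrite /T2 Ha /p => Hcr qpa.
by rewrite Ha /p in qa Hc' qa_pb'; split; lia.
Qed.

End SmallP.

Section SmallPGp.

Variables (a b c p q r w : nat).
Hypotheses (q_gt0 : 0 < q) (r_ge2 : 2 <= r) (wp : w < p) (Ha : a = r * p + w + 1)
  (q2p : 2 * q <= p) (a2b : 2 * a <= b) (coprime_ab : coprime a b)
  (Hc : c + q * a = p * b).

Let Ew : (a%:Z - r%:Z * p%:Z = (w + 1)%:Z)%R. Proof. rewrite Ha; lia. Qed.
Let qa_pb : 2 * (q * a) <= p * b. Proof. nia. Qed.
Let abc_gt0 : [/\ 0 < a, 0 < b & 0 < c]. Proof. split; nia. Qed.

Lemma gp2_small_p_hi : (q%:Z * a%:Z <= (a%:Z - r%:Z * p%:Z) * b%:Z)%R ->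
  is_gp 2 a b c ((a%:Z - r%:Z * p%:Z - 1) * b%:Z + (r%:Z + 2) * c%:Z - a%:Z).
Proof.
rewrite Ew -!PoszM lez_nat => cond; have [a_gt0 b_gt0 c_gt0] := abc_gt0.
have [p1 Ep] : exists p1, p = p1 + 1 by exists p.-1; lia.
have Ha1 : a = r * (p1 + 1) + w + 1 by rewrite -Ep.
have Hc1 : c + q * a = (p1 + 1) * b by rewrite -Ep.
have qa_pb1 : 2 * (q * a) <= (p1 + 1) * b by rewrite -Ep.
have wp1 : w <= p1 by lia.
have := small_p_reps q_gt0 r_ge2 wp1 Ha1 Hc1 qa_pb1.
have -> : maxn (b * w + (r + 2) * c) (b * p1 + (r + 1) * c) = b * w + (r + 2) * c.
  by apply/maxn_idPl; lia.
move=> reps; have [aT HB Hq] := small_p_arith_hi q_gt0 r_ge2 wp1 Ha1 Hc1 qa_pb1.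
apply: (is_gp2_criterion a_gt0 b_gt0 c_gt0 coprime_ab Hc1 aT _ reps HB Hq).
- by rewrite (_ : (w + 1)%:Z = w%:Z + 1)%R // addrK; lia.
- exact: (small_p_two_sols_hi q_gt0 r_ge2 wp1 Ha1 Hc1 qa_pb1).
Qed.

Lemma gp2_small_p_lo : ((a%:Z - r%:Z * p%:Z) * b%:Z < q%:Z * a%:Z)%R ->
  is_gp 2 a b c ((p%:Z - 1) * b%:Z + (r%:Z + 1) * c%:Z - a%:Z).
Proof.
rewrite Ew -!PoszM ltz_nat => cond; have [a_gt0 b_gt0 c_gt0] := abc_gt0.
have [p1 Ep] : exists p1, p = p1 + 1 by exists p.-1; lia.
have Ha1 : a = r * (p1 + 1) + w + 1 by rewrite -Ep.
have Hc1 : c + q * a = (p1 + 1) * b by rewrite -Ep.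
have qa_pb1 : 2 * (q * a) <= (p1 + 1) * b by rewrite -Ep.
have wp1 : w <= p1 by lia.
have := small_p_reps q_gt0 r_ge2 wp1 Ha1 Hc1 qa_pb1.
have -> : maxn (b * w + (r + 2) * c) (b * p1 + (r + 1) * c) = b * p1 + (r + 1) * c.
  by apply/maxn_idPr; lia.
move=> reps; have [aT HB Hq] := small_p_arith_lo q_gt0 r_ge2 wp1 Ha1 Hc1 qa_pb1.
apply: (is_gp2_criterion a_gt0 b_gt0 c_gt0 coprime_ab Hc1 aT _ reps HB Hq).
- by rewrite Ep; lia.
- exact: (small_p_two_sols_lo q_gt0 r_ge2 wp1 Ha1 Hc1 qa_pb1).
Qed.

End SmallPGp.

Lemma gp2_fib_small_k i k : 3 <= i -> 3 <= k ->
  let r := ((fib i - 1) %/ fib k)%N in 2 <= r ->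
  (((fib (k - 2))%:Z * (fib i)%:Z <= ((fib i)%:Z - r%:Z * (fib k)%:Z) * (fib (i + 2))%:Z)%R ->
     is_gp 2 (fib i) (fib (i + 2)) (fib (i + k))
       (((fib i)%:Z - r%:Z * (fib k)%:Z - 1) * (fib (i + 2))%:Z
        + (r%:Z + 2) * (fib (i + k))%:Z - (fib i)%:Z)) /\
  ((((fib i)%:Z - r%:Z * (fib k)%:Z) * (fib (i + 2))%:Z < (fib (k - 2))%:Z * (fib i)%:Z)%R ->
     is_gp 2 (fib i) (fib (i + 2)) (fib (i + k))
       (((fib k)%:Z - 1) * (fib (i + 2))%:Z + (r%:Z + 1) * (fib (i + k))%:Z - (fib i)%:Z)).
Proof.
move=> hi hk r r_ge2.
have a_gt0 : 0 < fib i by apply: fib_gt0; lia.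
have p_gt0 : 0 < fib k by apply: fib_gt0; lia.
have Ha : fib i = r * fib k + (fib i - 1) %% fib k + 1 by rewrite /r -divn_eq subnK.
have wp := ltn_pmod (fib i - 1) p_gt0.
have q_gt0 : 0 < fib (k - 2) by apply: fib_gt0; lia.
have q2p : 2 * fib (k - 2) <= fib k by have := fib_addn2_ge (k - 2); rewrite subnK //; lia.
have Hc : fib (i + k) + fib (k - 2) * fib i = fib k * fib (i + 2) by apply: fib_cross; lia.
have cop := coprime_fib_addn2 i.
split.
- exact: (gp2_small_p_hi q_gt0 r_ge2 wp Ha q2p (fib_addn2_ge i) cop Hc).
- exact: (gp2_small_p_lo q_gt0 r_ge2 wp Ha q2p (fib_addn2_ge i) cop Hc).
Qed.

Unset Implicit Arguments.
Local Open Scope ring_scope.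

Theorem theorem3 (i k : nat) (hi : (3 <= i)%N) (hk : (3 <= k)%N) :
  let F := fun n : nat => (fib n)%:Z in
  ((i + 3 <= k)%N ->
     is_gp 2 (fib i) (fib (i + 2)) (fib (i + k))
       ((3 * F i - 1) * F (i + 2)%N - F i)) /\
  (odd i ->
     is_gp 2 (fib i) (fib (i + 2)) (fib (2 * i + 2))
       ((F (i - 2)%N - 1) * F (i + 2)%N + F (2 * i + 2)%N - F i)) /\
  (~~ odd i ->
     is_gp 2 (fib i) (fib (i + 2)) (fib (2 * i + 2))
       ((F (i + 2)%N - 1) * F (i + 2)%N - F i)) /\
  is_gp 2 (fib i) (fib (i + 2)) (fib (2 * i + 1))
    ((F i - 1) * F (i + 2)%N + F (2 * i + 1)%N - F i) /\
  is_gp 2 (fib i) (fib (i + 2)) (fib (2 * i))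
    ((2 * F i - 1) * F (i + 2)%N - F i) /\
  ((5 <= i)%N ->
     is_gp 2 (fib i) (fib (i + 2)) (fib (2 * i - 1)%N)
       ((F (i - 4)%N - 1) * F (i + 2)%N + 3 * F (2 * i - 1)%N - F i)) /\
  (is_gp 2 (fib 4) (fib 6) (fib 7) (F 6%N + 2 * F 7%N - F 4%N) /\
   F 6%N + 2 * F 7%N - F 4%N = 31) /\
  (let r := ((fib i - 1) %/ fib k)%N in
   (2 <= r)%N ->
   ((F i - r%:Z * F k) * F (i + 2)%N >= F (k - 2)%N * F i ->
      is_gp 2 (fib i) (fib (i + 2)) (fib (i + k))
        ((F i - r%:Z * F k - 1) * F (i + 2)%N + (r%:Z + 2) * F (i + k)%N - F i)) /\
   ((F i - r%:Z * F k) * F (i + 2)%N < F (k - 2)%N * F i ->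
      is_gp 2 (fib i) (fib (i + 2)) (fib (i + k))
        ((F k - 1) * F (i + 2)%N + (r%:Z + 1) * F (i + k)%N - F i))).
Proof.
move=> F; rewrite {}/F.
split; first exact: gp2_fib_large_k.
split; first exact: gp2_fib_2i2_odd.
split; first exact: gp2_fib_2i2_even.
split; first exact: gp2_fib_2i1.
split; first exact: gp2_fib_2i.
split; first exact: gp2_fib_2i_sub1.
by split; [split; [exact: gp2_fib_4_6_7 |] | exact: gp2_fib_small_k].
Qed.
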